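(* Let $n\ge2$ and let $F:\mathbf{R}^n\to\mathbf{R}$ be an integrand. Then $\mathcal{D}(F)(v)=\|v\|_F$ for every $v\in\mathbf{R}^n$.
   Context: $\mathbb{S}^{n-1}$ is the unit sphere. An integrand is a lower semicontinuous $F:\mathbf{R}^n\to\mathbf{R}$ with $F(\lambda x)=\lambda F(x)$ for $\lambda\ge0$ and $F>0$ on $\mathbb{S}^{n-1}$. $K_F:=\bigcap_{v\in\mathbb{S}^{n-1}}\{z:\langle z,v\rangle\le F(v)\}$; $\mathfrak{P}\Omega:=\{z:\langle z,x\rangle\le1\ \forall x\in\Omega\}$; $\|z\|_F:=\min\{\lambda\ge0: z\in\lambda\,\mathfrak{P}K_F\}$. $\mathcal{W}(F)(v):=\inf_{w\in\mathbb{S}^{n-1},\langle v,w\rangle>0}F(w)/\langle v,w\rangle$, $\mathcal{A}(G)(v):=\sup_{w\in\mathbb{S}^{n-1}}G(w)\langle v,w\rangle$ for $v\in\mathbb{S}^{n-1}$, extended by 1-homogeneity; $\mathcal{D}(F):=\mathcal{A}(\mathcal{W}(F))$. *)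

From HB Require Import structures.
From mathcomp Require Import all_boot all_order all_algebra.
From mathcomp Require Import all_classical all_reals all_analysis.
Set Implicit Arguments. Unset Strict Implicit. Unset Printing Implicit Defensive.
Import Order.TTheory GRing.Theory Num.Theory.
Import numFieldNormedType.Exports.
Local Open Scope classical_set_scope.
Local Open Scope ring_scope.

Section Defs.
Context {R : realType} {n : nat}.
Local Notation V := 'rV[R]_n.

Definition dotp (x y : V) : R := \sum_(i < n) x ord0 i * y ord0 i.

Definition sphere : set V := [set w | dotp w w = 1].

Definition integrand (F : V -> R) : Prop :=
  [/\ lower_semicontinuous (fun x => (F x)%:E),
      (forall (lam : R) (x : V), 0 <= lam -> F (lam *: x) = lam * F x)
    & (forall v, sphere v -> 0 < F v)].

Definition KF (F : V -> R) : set V :=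
  [set z | forall v, sphere v -> dotp z v <= F v].

Definition polar (Om : set V) : set V :=
  [set z | forall x, Om x -> dotp z x <= 1].

Definition scale_set (lam : R) (A : set V) : set V := [set lam *: a | a in A].

(* ||z||_F := min {lam >= 0 : z in lam P K_F}  (stated as an infimum in \bar R;
   the minimum exists) *)
Definition normF (F : V -> R) (z : V) : \bar R :=
  ereal_inf [set (lam%:E) | lam in [set lam : R | 0 <= lam /\ scale_set lam (polar (KF F)) z]].

Definition enorm (v : V) : R := Num.sqrt (dotp v v).

Definition hom_ext (g : V -> \bar R) (v : V) : \bar R :=
  if v == 0 then 0%E else ((enorm v)%:E * g ((enorm v)^-1 *: v))%E.

Definition Wulff (F : V -> R) : V -> \bar R :=
  hom_ext (fun v => ereal_inf [set (F w / dotp v w)%:E |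
                                 w in [set w | sphere w /\ 0 < dotp v w]]).

Definition Aop (G : V -> \bar R) : V -> \bar R :=
  hom_ext (fun v => ereal_sup [set (G w * (dotp v w)%:E)%E | w in sphere]).

Definition Dop (F : V -> R) : V -> \bar R := Aop (Wulff F).

End Defs.

(** Both sides are the support function [h(v) = sup_{z in K_F} <v, z>] of the
    Wulff shape [K_F]. On the sphere, [W(F)] is the radial function of [K_F]:
    [W(F)(w) w] lies in [K_F], and every nonzero [z] in [K_F] satisfies
    [|z| <= W(F)(z/|z|)]; hence [sup_w W(F)(w) <v, w>] is [h(v)]. On the other
    side [v] lies in [lam P K] exactly when [h(v) <= lam], so the gauge of the
    polar body is [h] as well. *)
From HB Require Import structures.
From mathcomp Require Import all_boot all_order all_algebra.
From mathcomp Require Import all_classical all_reals all_analysis.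
Import Order.TTheory GRing.Theory Num.Theory.
Local Open Scope ring_scope.

Section Support.
Context {R : realType} {n : nat}.
Local Notation V := 'rV[R]_n.
Local Open Scope classical_set_scope.

Lemma dotpC (x y : V) : dotp x y = dotp y x.
Proof. by rewrite /dotp; apply: eq_bigr => i _; rewrite mulrC. Qed.

Lemma dotpZl (a : R) (x y : V) : dotp (a *: x) y = a * dotp x y.
Proof. by rewrite /dotp mulr_sumr; apply: eq_bigr => i _; rewrite mxE mulrA. Qed.

Lemma dotpZr (a : R) (x y : V) : dotp x (a *: y) = a * dotp x y.
Proof. by rewrite dotpC dotpZl dotpC. Qed.

Lemma dotp0l (y : V) : dotp 0 y = 0.
Proof. by rewrite -(scale0r 0) dotpZl mul0r. Qed.

Lemma dotp0r (y : V) : dotp y 0 = 0.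
Proof. by rewrite dotpC dotp0l. Qed.

Lemma dotp_ge0 (x : V) : 0 <= dotp x x.
Proof. by rewrite /dotp sumr_ge0 // => i _; rewrite -expr2 sqr_ge0. Qed.

Lemma dotp_eq0 (x : V) : dotp x x = 0 -> x = 0.
Proof.
have sq_ge0 i : 0 <= x ord0 i * x ord0 i by rewrite -expr2 sqr_ge0.
move=> /(psumr_eq0P (fun i _ => sq_ge0 i)) x0.
apply/rowP => i; apply/eqP; rewrite mxE -[_ == 0]orbb -mulf_eq0.
exact/eqP/x0.
Qed.

Lemma sphere_neq0 {w : V} : sphere w -> w != 0.
Proof. by move=> sw; apply: contra_eqN sw => /eqP ->; rewrite dotp0l eq_sym oner_eq0. Qed.

Lemma enorm_sphere (w : V) : sphere w -> enorm w = 1.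
Proof. by rewrite /enorm => ->; rewrite sqrtr1. Qed.

Lemma enorm_gt0 {v : V} : v != 0 -> 0 < enorm v.
Proof.
move=> v0; rewrite /enorm sqrtr_gt0 lt_def dotp_ge0 andbT.
by apply: contraNN v0 => /eqP /dotp_eq0 ->.
Qed.

Lemma sphere_normalize {v : V} : v != 0 -> sphere ((enorm v)^-1 *: v).
Proof.
move=> v0; have e0 : enorm v != 0 by rewrite gt_eqF // enorm_gt0.
rewrite /sphere /= dotpZl dotpZr -[dotp v v]sqr_sqrtr ?dotp_ge0 // -/(enorm v).
by rewrite mulrA -expr2 exprVn mulVf // expf_neq0.
Qed.

Lemma normalizeK {v : V} : v != 0 -> enorm v *: ((enorm v)^-1 *: v) = v.
Proof. by move=> v0; rewrite scalerA mulfV ?scale1r // gt_eqF // enorm_gt0. Qed.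

Lemma hom_ext_sphere (g : V -> \bar R) (w : V) : sphere w -> hom_ext g w = g w.
Proof.
move=> sw; rewrite /hom_ext (negbTE (sphere_neq0 sw)) enorm_sphere //.
by rewrite invr1 scale1r mul1e.
Qed.

Lemma eq_hom_ext_sphere (g g' : V -> \bar R) :
  {in sphere, g =1 g'} -> hom_ext g =1 hom_ext g'.
Proof.
move=> gg' v; rewrite /hom_ext; case: eqP => // /eqP v0.
by rewrite gg' // inE; exact: sphere_normalize.
Qed.

Lemma hom_ext_id (G : V -> \bar R) : G 0 = 0%E ->
  (forall (a : R) v, 0 < a -> G (a *: v) = (a%:E * G v)%E) -> hom_ext G =1 G.
Proof.
move=> G0 GZ v; rewrite /hom_ext; case: eqP => [->|/eqP v0] //.
by rewrite -GZ ?normalizeK // enorm_gt0.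
Qed.

Definition support (K : set V) (v : V) : \bar R :=
  ereal_sup [set (dotp v z)%:E | z in K].

Lemma support_ge0 (K : set V) (v : V) : K 0 -> (0 <= support K v)%E.
Proof. by move=> K0; apply: ereal_sup_ubound; exists 0; rewrite ?dotp0r. Qed.

Lemma support0 (K : set V) : K 0 -> support K 0 = 0%E.
Proof.
move=> K0; apply/le_anti; rewrite support_ge0 // andbT.
by apply/ereal_supP => _ [z _ <-]; rewrite dotp0l.
Qed.

Lemma supportZ (K : set V) (a : R) (v : V) : 0 < a ->
  support K (a *: v) = (a%:E * support K v)%E.
Proof.
move=> a0; rewrite /support -ereal_sup_pZl // image_comp.
by congr ereal_sup; apply: eq_imagel => z _ /=; rewrite dotpZl EFinM.
Qed.

Lemma support_hom_ext {K : set V} : K 0 -> hom_ext (support K) =1 support K.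
Proof. by move=> K0; apply: hom_ext_id; [exact: support0 | exact: supportZ]. Qed.

Lemma gauge_polar (K : set V) (v : V) : K 0 ->
  ereal_inf [set lam%:E | lam in [set lam : R | 0 <= lam /\
                                   scale_set lam (polar K) v]] = support K v.
Proof.
move=> K0; apply/le_anti/andP; split; last first.
  apply/ereal_infP => _ [lam [lam0 [a Pa <-]] <-].
  apply/ereal_supP => _ [z Kz <-]; rewrite lee_fin dotpZl.
  by rewrite -[leRHS]mulr1 ler_wpM2l // Pa.
have := @support_ge0 K v K0; case hv: (support K v) => [h| |] // h0; last by rewrite leey.
apply/lee_addgt0Pr => eps eps0; rewrite -EFinD.
have lam0 : 0 < h + eps by rewrite ltr_wpDl // -lee_fin.
apply: ereal_inf_lbound; exists (h + eps) => //; split; first exact: ltW.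
exists ((h + eps)^-1 *: v); last by rewrite scalerA mulfV ?scale1r // gt_eqF.
move=> x Kx; rewrite dotpZl mulrC ler_pdivrMr // mul1r.
have vx_le_h : dotp v x <= h.
  by rewrite -lee_fin -hv; apply: ereal_sup_ubound; exists x.
by rewrite (le_trans vx_le_h) // lerDl ltW.
Qed.

End Support.

Section WulffShape.
Context {R : realType} {n : nat}.
Local Notation V := 'rV[R]_n.
Local Open Scope classical_set_scope.

Variable F : V -> R.
Hypothesis F_gt0 : forall {v}, sphere v -> 0 < F v.

Lemma KF0 : KF F 0.
Proof. by move=> u su; rewrite dotp0l ltW // F_gt0. Qed.

Lemma Wulff_sphere (w : V) : sphere w ->
  Wulff F w = ereal_inf [set (F u / dotp w u)%:E |
                         u in [set u | sphere u /\ 0 < dotp w u]].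
Proof. exact: hom_ext_sphere. Qed.

Lemma Wulff_sphere_fin {w : V} : sphere w -> exists2 r, Wulff F w = r%:E & 0 <= r.
Proof.
move=> sw; have Wge0 : (0 <= Wulff F w)%E.
  rewrite Wulff_sphere //; apply/ereal_infP => _ [u [su wu0] <-].
  by rewrite lee_fin divr_ge0 ?(ltW (F_gt0 su)) ?ltW.
have WleF : (Wulff F w <= (F w)%:E)%E.
  rewrite Wulff_sphere //; apply: ereal_inf_lbound.
  by exists w; [split; rewrite // sw ltr01 | rewrite sw divr1].
by move: Wge0 WleF; case: (Wulff F w) => // r; exists r; rewrite // -lee_fin.
Qed.

Lemma Wulff_radial_KF (w : V) (r : R) : sphere w -> Wulff F w = r%:E -> 0 <= r ->
  KF F (r *: w).
Proof.
move=> sw Wr r0 u su; rewrite dotpZl.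
have [wu0|wu0] := ltP 0 (dotp w u); last first.
  by apply: le_trans (ltW (F_gt0 su)); rewrite mulr_ge0_le0.
rewrite -ler_pdivlMr // -lee_fin -Wr Wulff_sphere //.
by apply: ereal_inf_lbound; exists u.
Qed.

Lemma enorm_le_Wulff (z : V) : KF F z -> z != 0 ->
  ((enorm z)%:E <= Wulff F ((enorm z)^-1 *: z))%E.
Proof.
move=> Kz z0; rewrite Wulff_sphere; last exact: sphere_normalize.
apply/ereal_infP => _ [u [su zu0] <-].
by rewrite lee_fin ler_pdivlMr // -dotpZl normalizeK // Kz.
Qed.

Lemma sup_Wulff_le_support (v : V) :
  (ereal_sup [set (Wulff F w * (dotp v w)%:E)%E | w in sphere] <= support (KF F) v)%E.
Proof.
apply/ereal_supP => _ [w sw <-]; have [r Wr r0] := Wulff_sphere_fin sw.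
rewrite Wr -EFinM; apply: ereal_sup_ubound; exists (r *: w).
  exact: Wulff_radial_KF.
by rewrite dotpZr.
Qed.

Lemma support_le_sup_Wulff (v : V) : sphere v ->
  (support (KF F) v <= ereal_sup [set (Wulff F w * (dotp v w)%:E)%E | w in sphere])%E.
Proof.
move=> sv; set S := ereal_sup _.
have S_ge0 : (0 <= S)%E.
  apply: le_ereal_sup_tmp; exists (Wulff F v * (dotp v v)%:E)%E; first by exists v.
  have [r -> r0] := Wulff_sphere_fin sv; by rewrite -EFinM lee_fin mulr_ge0 // sv.
apply/ereal_supP => _ [z Kz <-].
have [->|z0] := eqVneq z 0; first by rewrite dotp0r.
set w := (enorm z)^-1 *: z; have sw : sphere w := sphere_normalize z0.
rewrite -(normalizeK z0) dotpZr -/w.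
have [vw0|vw0] := leP 0 (dotp v w); last first.
  by rewrite (le_trans _ S_ge0) // lee_fin pmulr_rle0 ?(ltW vw0) // enorm_gt0.
apply: le_ereal_sup_tmp; exists (Wulff F w * (dotp v w)%:E)%E; first by exists w.
by rewrite EFinM lee_wpmul2r ?lee_fin // enorm_le_Wulff.
Qed.

Lemma Dop_support : Dop F =1 support (KF F).
Proof.
move=> v; rewrite /Dop /Aop -(support_hom_ext KF0).
apply: eq_hom_ext_sphere => w; rewrite inE => sw; apply/le_anti.
by rewrite sup_Wulff_le_support support_le_sup_Wulff.
Qed.

End WulffShape.

Theorem corollary3p2 (R : realType) (n : nat) (F : 'rV[R]_n -> R) :
  (2 <= n)%N -> integrand F ->
  forall v : 'rV[R]_n, Dop F v = normF F v.
Proof.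
move=> _ [_ _ F_gt0] v.
by rewrite Dop_support // /normF gauge_polar //; exact: KF0.
Qed.
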